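(* Let $\hat{\mathcal{Z}}_k=\langle \hat c_k,\hat G_k\rangle\subset\mathbb{R}^n$ be a zonotope with $\mathcal{R}_{\phi,k}\subseteq\hat{\mathcal{Z}}_k$. For $i=1,\dots,n_{\phi,k}$ let the side information at step $k$ be encoded by a set $\mathcal{S}_{i,k}\subseteq\mathbb{R}^n$ such that every $x\in\mathcal{R}_{\phi,k}$ lies in $\mathcal{S}_{i,k}$, where each $\mathcal{S}_{i,k}$ is of one of two types: (linear) $\mathcal{S}_{i,k}=\{x:|H_{i,k}x-y_{i,k}|\le r_{i,k}\}$ with $H_{i,k}\in\mathbb{R}^{p\times n}$, $y_{i,k}\in\mathbb{R}^p$, $r_{i,k}\in\mathbb{R}^p_{\ge 0}$; (nonlinear) $\mathcal{S}_{i,k}=\{x:|h_{i,k}(x)|\le r_{i,k}\}$ with $h_{i,k}:\mathbb{R}^n\to\mathbb{R}^p$ differentiable and $r_{i,k}\in\mathbb{R}^p_{\ge0}$ (absolute values and inequalities componentwise). Run the following procedure. Initialize $\bar c_k=\hat c_k$, $\bar G_k=\hat G_k$. For $i=1,\dots,n_{\phi,k}$ in order, with an arbitrary matrix $\lambda_{i,k}\in\mathbb{R}^{n\times p}$: - in the linear case, set $\bar c_k\leftarrow \bar c_k+\lambda_{i,k}(y_{i,k}-H_{i,k}\bar c_k)$ and $\bar G_k\leftarrow\big[(I-\lambda_{i,k}H_{i,k})\bar G_k,\ \lambda_{i,k}\operatorname{diag}(r_{i,k})\big]$; - in the nonlinear case, pick a point $x^*_{i,k}\in\mathbb{R}^n$,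 let $J_{i,k}=\frac{\partial h_{i,k}}{\partial x}\big|_{x^*_{i,k}}$, and pick a zonotope $\langle c_{L,i,k},G_{L,i,k}\rangle\subset\mathbb{R}^p$ such that $h_{i,k}(x)-h_{i,k}(x^*_{i,k})-J_{i,k}(x-x^*_{i,k})\in\langle c_{L,i,k},G_{L,i,k}\rangle$ for every $x$ in the current zonotope $\langle\bar c_k,\bar G_k\rangle$; then set $\bar c_k\leftarrow\bar c_k-\lambda_{i,k}\big(h_{i,k}(x^*_{i,k})+J_{i,k}(\bar c_k-x^*_{i,k})+c_{L,i,k}\big)$ and $\bar G_k\leftarrow\big[(I-\lambda_{i,k}J_{i,k})\bar G_k,\ \lambda_{i,k}\operatorname{diag}(r_{i,k}),\ -\lambda_{i,k}G_{L,i,k}\big]$ (all updates using the values of $\bar c_k,\bar G_k$ before the update). Then the resulting zonotope $\bar{\mathcal{Z}}_k=\langle\bar c_k,\bar G_k\rangle$ satisfies $\bar{\mathcal{Z}}_k\supseteq\mathcal{R}_{\phi,k}$.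
   Context: A zonotope with center $c\in\mathbb{R}^n$ and generator matrix $G\in\mathbb{R}^{n\times\gamma}$ is $\langle c,G\rangle=\{c+G\beta:\beta\in[-1,1]^\gamma\}$. Consider the discrete-time system $x(k+1)=f(x(k),u(k))+w(k)$ with $f$ an unknown twice differentiable function, process noise $w(k)\in\mathcal{Z}_w$ ($\mathcal{Z}_w$ a zonotope), inputs $u(k)\in\mathcal{U}_k$ (zonotopes), initial set $\mathcal{X}_0$ (a zonotope), and signal temporal logic side-information formulas $\phi_k=\phi_{1,k}\wedge\dots\wedge\phi_{n_{\phi,k},k}$ for each step $k$. The STL-constrained reachable set is $\mathcal{R}_{\phi,N}=\{x(N)\in\mathbb{R}^n:\ x(0)\in\mathcal{X}_0,\ x(0)\models\phi_0,\ \text{and for all }k\in\{0,\dots,N-1\}:\ x(k+1)=f(x(k),u(k))+w(k),\ w(k)\in\mathcal{Z}_w,\ u(k)\in\mathcal{U}_k,\ x(k+1)\models\phi_{k+1}\}$. For $r\in\mathbb{R}^p$, $\operatorname{diag}(r)$ denotes the diagonal matrix with diagonal $r$. *)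

From Stdlib Require List.
From HB Require Import structures.
From mathcomp Require Import all_boot all_order all_algebra.
From mathcomp Require Import all_classical all_reals all_analysis.
Set Implicit Arguments. Unset Strict Implicit. Unset Printing Implicit Defensive.
Import Order.TTheory GRing.Theory Num.Theory.
Import numFieldNormedType.Exports.
Local Open Scope classical_set_scope.
Local Open Scope ring_scope.

Section Zonotopes.
Variable R : realType.

Record zono (n : nat) := Zono { zgen : nat; zc : 'cV[R]_n; zG : 'M[R]_(n, zgen) }.

Definition zset (n : nat) (Z : zono n) : set 'cV[R]_n :=
  [set x | exists beta : 'cV[R]_(zgen Z),
      (forall j, -1 <= beta j 0 <= 1) /\ x = zc Z + zG Z *m beta].

Inductive sideinfo (n : nat) :=
| SLin (p : nat) (H : 'M[R]_(p, n)) (y r : 'cV[R]_p)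
| SNonlin (p : nat) (h : 'cV[R]_n -> 'cV[R]_p) (r : 'cV[R]_p).

Definition si_set (n : nat) (s : sideinfo n) : set 'cV[R]_n :=
  match s with
  | SLin p H y r => [set x | forall j, `|(H *m x - y) j 0| <= r j 0]
  | SNonlin p h r => [set x | forall j, `|(h x) j 0| <= r j 0]
  end.

Definition si_wf (n : nat) (s : sideinfo n) : Prop :=
  match s with
  | SLin p H y r => forall j, 0 <= r j 0
  | SNonlin p h r => (forall j, 0 <= r j 0) /\ (forall x, differentiable h x)
  end.

Definition si_update (n : nat) (Z : zono n) (s : sideinfo n) (Z' : zono n) : Prop :=
  match s with
  | SLin p H y r =>
      exists lambda : 'M[R]_(n, p),
        Z' = Zono (zc Z + lambda *m (y - H *m zc Z))
                  (row_mx ((1%:M - lambda *m H) *m zG Z) (lambda *m diag_mx r^T))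
  | SNonlin p h r =>
      exists (lambda : 'M[R]_(n, p)) (xs : 'cV[R]_n) (J : 'M[R]_(p, n))
             (gL : nat) (cL : 'cV[R]_p) (GL : 'M[R]_(p, gL)),
        (forall v, 'd h xs v = J *m v) /\
        (forall x, zset Z x -> zset (Zono cL GL) (h x - h xs - J *m (x - xs))) /\
        Z' = Zono (zc Z - lambda *m (h xs + J *m (zc Z - xs) + cL))
                  (row_mx (row_mx ((1%:M - lambda *m J) *m zG Z) (lambda *m diag_mx r^T))
                          (- (lambda *m GL)))
  end.

Inductive si_run (n : nat) : zono n -> seq (sideinfo n) -> zono n -> Prop :=
| run_nil Z : si_run Z [::] Z
| run_cons Z s ss Z1 Z2 : si_update Z s Z1 -> si_run Z1 ss Z2 -> si_run Z (s :: ss) Z2.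

(* STL side information phi_k = phi_{1,k} /\ ... : each atomic formula is
   interpreted through its satisfaction predicate on states. *)
Definition sat_all (n : nat) (phik : seq ('cV[R]_n -> Prop)) (x : 'cV[R]_n) : Prop :=
  forall P, List.In P phik -> P x.

(* f twice differentiable (in the joint argument (x,u) stacked as col_mx x u). *)
Definition twice_differentiable (n m : nat) (f : 'cV[R]_(n + m) -> 'cV[R]_n) : Prop :=
  forall z, differentiable f z /\ forall v, differentiable (fun z' => 'd f z' v) z.

Definition reach_phi (n m : nat) (f : 'cV[R]_(n + m) -> 'cV[R]_n) (Zw : zono n)
    (U : nat -> zono m) (X0 : zono n) (phi : nat -> seq ('cV[R]_n -> Prop)) (N : nat)
    : set 'cV[R]_n :=
  [set x | exists (xs : nat -> 'cV[R]_n) (us : nat -> 'cV[R]_m) (ws : nat -> 'cV[R]_n),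
     [/\ zset X0 (xs 0%N), sat_all (phi 0%N) (xs 0%N),
         (forall k, (k < N)%N ->
            [/\ xs k.+1 = f (col_mx (xs k) (us k)) + ws k, zset Zw (ws k),
                zset (U k) (us k) & sat_all (phi k.+1) (xs k.+1)])
       & x = xs N]].

End Zonotopes.

From Stdlib Require List.
From HB Require Import structures.
From mathcomp Require Import all_boot all_order all_algebra.
From mathcomp Require Import all_classical all_reals all_analysis.
Import Order.TTheory GRing.Theory Num.Theory.
Import numFieldNormedType.Exports.
Local Open Scope classical_set_scope.
Local Open Scope ring_scope.

(* Each update is an exact decomposition of the point itself: for any
   lambda, x = (I - lambda H) x + lambda (H x - y) + lambda y, and the three
   summands lie in an affine image of the current zonotope, in an image of
   the box <0, diag r> given by the side information, and in a point.  In the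
   nonlinear case H x is replaced by the linearization
   J x = h x - (h x - h xs - J (x - xs)) - (h xs - J xs), whose remainder lies
   in <cL, GL>.  Zonotopes are closed under affine maps and Minkowski sums
   (concatenating generators), so x stays in every updated zonotope. *)

Set Implicit Arguments. Unset Strict Implicit.

Section ZonotopeCalculus.
Variable R : realType.

Lemma col_mx_unit_box a b (u : 'cV[R]_a) (v : 'cV[R]_b) :
  (forall j, -1 <= u j 0 <= 1) -> (forall j, -1 <= v j 0 <= 1) ->
  forall j, -1 <= col_mx u v j 0 <= 1.
Proof.
move=> hu hv j; rewrite -[j]splitK; case: (fintype.split j) => j' /=.
- by rewrite col_mxEu.
- by rewrite col_mxEd.
Qed.

Lemma zset_affine n p (A : 'M[R]_(p, n)) (t : 'cV[R]_p) (c : 'cV[R]_n) g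
    (G : 'M[R]_(n, g)) x :
  zset (Zono c G) x -> zset (Zono (A *m c + t) (A *m G)) (A *m x + t).
Proof.
case=> beta [hbeta ->]; exists beta; split => //=.
by rewrite mulmxDr mulmxA addrAC.
Qed.

Lemma zset_add n (c1 c2 : 'cV[R]_n) g1 g2 (G1 : 'M[R]_(n, g1))
    (G2 : 'M[R]_(n, g2)) x1 x2 :
  zset (Zono c1 G1) x1 -> zset (Zono c2 G2) x2 ->
  zset (Zono (c1 + c2) (row_mx G1 G2)) (x1 + x2).
Proof.
case=> beta1 [hbeta1 ->]; case=> beta2 [hbeta2 ->].
exists (col_mx beta1 beta2); split; first exact: col_mx_unit_box.
by rewrite /= mul_row_col addrACA.
Qed.

(* The witness is v / r entrywise; where r vanishes the hypothesis forces v to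
   vanish too, so the junk value 0 / 0 = 0 is harmless. *)
Lemma zset_diag p (r v : 'cV[R]_p) :
  (forall j, `|v j 0| <= r j 0) -> zset (Zono 0 (diag_mx r^T)) v.
Proof.
move=> hv; exists (\col_j (v j 0 / r j 0)); split.
  move=> j; rewrite mxE -ler_norml.
  have [->|r0] := eqVneq (r j 0) 0; first by rewrite invr0 mulr0 normr0.
  have r_gt0 : 0 < r j 0 by rewrite lt_def r0 (le_trans _ (hv j)).
  by rewrite normrM normfV (gtr0_norm r_gt0) ler_pdivrMr // mul1r.
apply/matrixP => i j; rewrite add0r mul_diag_mx !mxE (ord1 j).
have [r0|r0] := eqVneq (r i 0) 0.
  by move: (hv i); rewrite r0 normr_le0 => /eqP ->; rewrite mul0r.
by rewrite mulrC divfK.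
Qed.

Lemma zset_update_lin n p (Z : zono R n) (H : 'M[R]_(p, n)) (y r : 'cV[R]_p)
    (lambda : 'M[R]_(n, p)) x :
  zset Z x -> (forall j, `|(H *m x - y) j 0| <= r j 0) ->
  zset (Zono (zc Z + lambda *m (y - H *m zc Z))
             (row_mx ((1%:M - lambda *m H) *m zG Z) (lambda *m diag_mx r^T))) x.
Proof.
case: Z => g c G /= hx hside.
have := zset_add (zset_affine (1%:M - lambda *m H) (lambda *m y) hx)
                 (zset_affine lambda 0 (zset_diag hside)).
have -> : (1%:M - lambda *m H) *m x + lambda *m y + (lambda *m (H *m x - y) + 0) = x.
  by rewrite addr0 mulmxBl mul1mx !mulmxBr mulmxA addrACA subrK subrr addr0.
suff -> : (1%:M - lambda *m H) *m c + lambda *m y + (lambda *m 0 + 0)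
          = c + lambda *m (y - H *m c) by [].
by rewrite mulmx0 !addr0 mulmxBl mul1mx !mulmxBr mulmxA addrAC -addrA.
Qed.

Lemma zset_update_nonlin n p (Z : zono R n) (h : 'cV[R]_n -> 'cV[R]_p)
    (r : 'cV[R]_p) (lambda : 'M[R]_(n, p)) (xs : 'cV[R]_n) (J : 'M[R]_(p, n))
    gL (cL : 'cV[R]_p) (GL : 'M[R]_(p, gL)) x :
  zset Z x -> (forall j, `|h x j 0| <= r j 0) ->
  zset (Zono cL GL) (h x - h xs - J *m (x - xs)) ->
  zset (Zono (zc Z - lambda *m (h xs + J *m (zc Z - xs) + cL))
             (row_mx (row_mx ((1%:M - lambda *m J) *m zG Z)
                             (lambda *m diag_mx r^T))
                     (- (lambda *m GL)))) x.
Proof.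
case: Z => g c G /= hx hside hrem.
set t := h xs - J *m xs; set w := h x - h xs - J *m (x - xs).
have := zset_add (zset_add (zset_affine (1%:M - lambda *m J) 0 hx)
                           (zset_affine lambda 0 (zset_diag hside)))
                 (zset_affine (- lambda) (- lambda *m t) hrem).
have linearization : h x - (w + t) = J *m x.
  by rewrite /w /t mulmxBr opprB addrACA subrK addrAC subrr add0r subKr.
have -> : (1%:M - lambda *m J) *m x + 0 + (lambda *m h x + 0)
          + (- lambda *m w + - lambda *m t) = x.
  rewrite !addr0 -mulmxDr mulNmx -addrA -mulmxBr linearization.
  by rewrite mulmxBl mul1mx mulmxA subrK.
suff -> : (1%:M - lambda *m J) *m c + 0 + (lambda *m 0 + 0)
          + (- lambda *m cL + - lambda *m t)
          = c - lambda *m (h xs + J *m (c - xs) + cL) by rewrite mulNmx.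
rewrite mulmx0 !addr0 -mulmxDr mulNmx mulmxBl mul1mx -mulmxA -addrA -opprD.
by rewrite -mulmxDr /t mulmxBr [cL + _]addrC addrA (addrCA (h xs)).
Qed.

Lemma zset_si_update n (Z Z' : zono R n) (s : sideinfo R n) x :
  si_update Z s Z' -> zset Z x -> si_set s x -> zset Z' x.
Proof.
case: s => [p H y r [lambda ->]|p h r [lambda [xs [J [gL [cL [GL [_ [hrem ->]]]]]]]]].
- exact: zset_update_lin.
- by move=> hx hside; apply: zset_update_nonlin (hrem _ hx).
Qed.

Lemma zset_si_run n (Z Z' : zono R n) (S : seq (sideinfo R n)) x :
  si_run Z S Z' -> (forall s, List.In s S -> si_set s x) -> zset Z x -> zset Z' x.
Proof.
elim=> {Z S Z'} [//|Z s ss Z1 Z2 hupd _ IH] hS hZ.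
apply: IH => [s' hs'|]; first by apply: hS; right.
by apply: zset_si_update hupd hZ _; apply: hS; left.
Qed.

End ZonotopeCalculus.

Theorem theorem1 (R : realType) (n m : nat)
    (f : 'cV[R]_(n + m) -> 'cV[R]_n) (Zw : zono R n) (U : nat -> zono R m)
    (X0 : zono R n) (phi : nat -> seq ('cV[R]_n -> Prop)) (k : nat)
    (Zhat : zono R n) (S : seq (sideinfo R n)) (Zbar : zono R n) :
  twice_differentiable f ->
  reach_phi f Zw U X0 phi k `<=` zset Zhat ->
  (forall s, List.In s S -> si_wf s) ->
  (forall s, List.In s S -> reach_phi f Zw U X0 phi k `<=` si_set s) ->
  si_run Zhat S Zbar ->
  reach_phi f Zw U X0 phi k `<=` zset Zbar.
Proof.
move=> _ reach_Zhat _ reach_side run x reach_x.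
apply: (zset_si_run run); last exact: reach_Zhat.
by move=> s s_in; apply: reach_side.
Qed.
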